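(* If $X$ is a GO-space and $E$ is a countable metrizable space, then $E\times X$ is $C$-selective.
   Context: All spaces are assumed $T_1$. A GO-space (generalized ordered space) is a linearly ordered set with a topology finer than the order topology that has a base of order-convex sets. For spaces $Y$, $X$, a map $\varphi:Y\to\mathcal P(X)\setminus\{\emptyset\}$ is lower semicontinuous (l.s.c.) if $\{y:\varphi(y)\cap U\neq\emptyset\}$ is open in $Y$ for every open $U\subseteq X$; a selection is a map $f:Y\to X$ with $f(y)\in\varphi(y)$ for all $y$. $X$ is $Y$-selective if every l.s.c. map from $Y$ to the nonempty closed subsets of $X$ has a continuous selection; $X$ is $C$-selective if it is $Y$-selective for every countable regular space $Y$. *)

From HB Require Import structures.
From mathcomp Require Import all_boot all_order all_algebra.
From mathcomp Require Import all_classical all_reals all_analysis.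
From mathcomp Require Import Rstruct Rstruct_topology.
Set Implicit Arguments. Unset Strict Implicit. Unset Printing Implicit Defensive.
Import Order.TTheory GRing.Theory Num.Theory.
Local Open Scope classical_set_scope.
Local Open Scope ring_scope.

(* T1 space (all spaces assumed T1 in the paper). *)
Definition T1_space (T : topologicalType) : Prop := @accessible_space T.

Definition order_convex (X : Type) (le : X -> X -> Prop) (A : set X) : Prop :=
  forall a b c, A a -> A c -> le a b -> le b c -> A b.

Definition linear_order (X : Type) (le : X -> X -> Prop) : Prop :=
  [/\ (forall x, le x x),
      (forall x y, le x y -> le y x -> x = y),
      (forall x y z, le x y -> le y z -> le x z)
    & (forall x y, le x y \/ le y x)].

(* GO-space: a linearly ordered set whose topology is finer than the order
   topology (every open ray is open; open rays form a subbase of the order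
   topology) and which has a base of order-convex open sets. *)
Definition GO_space (X : topologicalType) (le : X -> X -> Prop) : Prop :=
  [/\ linear_order le,
      (forall a : X, open [set x | le a x /\ x <> a]),
      (forall a : X, open [set x | le x a /\ x <> a])
    & (forall (U : set X) (x : X), open U -> U x ->
         exists V : set X, [/\ open V, order_convex le V, V x & V `<=` U])].

Definition metrizable (E : topologicalType) : Prop :=
  exists d : E -> E -> Rdefinitions.R,
    [/\ (forall x y, 0 <= d x y),
        (forall x y, d x y = 0 <-> x = y),
        (forall x y, d x y = d y x),
        (forall x y z, d x z <= d x y + d y z)
      & (forall U : set E,
           open U <-> (forall x, U x -> exists2 e : Rdefinitions.R, 0 < e &
                        [set y | d x y < e] `<=` U))].

Definition lsc (Y X : topologicalType) (phi : Y -> set X) : Prop :=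
  forall U : set X, open U -> open [set y | phi y `&` U !=set0].

Definition selective_for (Y X : topologicalType) : Prop :=
  forall phi : Y -> set X,
    (forall y, closed (phi y) /\ phi y !=set0) -> lsc phi ->
    exists f : Y -> X, continuous f /\ (forall y, phi y (f y)).

Definition C_selective (X : topologicalType) : Prop :=
  forall Y : topologicalType,
    countable [set: Y] -> @regular_space Y -> T1_space Y ->
    selective_for Y X.

(* A continuous selection of an l.s.c. closed-valued map on a countable space Y
   is obtained by shrinking the map, at the points of an enumeration of Y one
   after the other, to closed-valued l.s.c. submaps that are a singleton at the
   current point and upper semicontinuous there; these singletons then form the
   selection.

   To shrink psi at y0 to a point z0 of psi y0, use that a countable regular
   space is zero-dimensional: there are clopen neighbourhoods C_k of y0 decreasing
   to {y0} such that psi meets the neighbourhood V_k of z0 on C_(k+1).  On the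
   layer C_(k+1) \ C_(k+2) take the closure of psi ∩ S_k, where psi meets S_k
   whenever it meets V_k and the closures of the S_k shrink to z0.

   In E * X, with z0 = (e0, x0), take S_k = B_k * ({x0} ∪ (a_k, x0) ∪ (x0, b_k))
   with B_k the metric balls around e0.  Since psi has only countably many
   fibres, each of them closed, the endpoints a_k < x0 < b_k can be chosen so that
   a point (e, w) of psi y with w near x0 is either in S_k or may be replaced by
   the point (e, x0) of psi y. *)

From mathcomp Require Import all_boot all_order all_algebra.
From mathcomp Require Import all_classical all_reals all_analysis.
From mathcomp Require Import Rstruct Rstruct_topology lra.
Set Implicit Arguments. Unset Strict Implicit. Unset Printing Implicit Defensive.
Import Order.TTheory GRing.Theory Num.Theory.
Local Open Scope classical_set_scope.

Lemma countable_nat_surj (T : Type) (t0 : T) : countable [set: T] ->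
  exists e : nat -> T, forall t, exists n, e n = t.
Proof.
move=> /countable_injP[c cinj].
exists (fun n => if pselect (exists t, c t = n) is left h then projT1 (cid h) else t0).
move=> t; exists (c t); case: pselect => [h|]; last by case; exists t.
by case: (cid h) => t' /= ct'; apply: cinj; rewrite ?inE.
Qed.

Lemma nondecreasing_sets (T : Type) (A : nat -> set T) :
  (forall n, A n `<=` A n.+1) -> forall n m, (n <= m)%N -> A n `<=` A m.
Proof.
by move=> AS; apply: (homo_leq (r := @subset T)) => [B|B C D|//];
  [exact: subset_refl | exact: subset_trans].
Qed.

Lemma nonincreasing_sets (T : Type) (A : nat -> set T) :
  (forall n, A n.+1 `<=` A n) -> forall n m, (n <= m)%N -> A m `<=` A n.
Proof.
move=> AS; apply: (homo_leq (r := fun B C => C `<=` B)) => [B|B C D CB DC|//].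
  exact: subset_refl.
exact: subset_trans DC CB.
Qed.

Lemma closure_sub_closed (T : topologicalType) (A K : set T) :
  closed K -> A `<=` K -> closure A `<=` K.
Proof. by move=> cK AK; rewrite closureE; exact: smallest_sub. Qed.

Lemma regular_open_nbhs_closure (T : topologicalType) (A : set T) (a : T) :
  regular_space T -> open A -> A a -> exists2 B, open_nbhs a B & closure B `<=` A.
Proof.
move=> rT oA Aa; have [B nB clBA] := rT a A (open_nbhs_nbhs (conj oA Aa)).
exists B°; last exact: subset_trans (closureS (@interior_subset _ B)) clBA.
by split; [exact: open_interior | exact: nbhs_singleton (nbhs_interior nB)].
Qed.

Section ProductTopology.
Variables U V : topologicalType.

Lemma fst_continuous : continuous (@fst U V).
Proof. by move=> p; exact: cvg_fst. Qed.

Lemma snd_continuous : continuous (@snd U V).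
Proof. by move=> p; exact: cvg_snd. Qed.

Lemma open_setX (A : set U) (B : set V) : open A -> open B -> open (A `*` B).
Proof.
move=> oA oB; apply: openI.
- exact: (proj1 (continuousP _) fst_continuous).
- exact: (proj1 (continuousP _) snd_continuous).
Qed.

Lemma closed_setX (A : set U) (B : set V) : closed A -> closed B -> closed (A `*` B).
Proof.
move=> cA cB; apply: closedI.
- exact: preimage_closed (in1W fst_continuous) cA.
- exact: preimage_closed (in1W snd_continuous) cB.
Qed.

Lemma closed_fiber (F : set (U * V)) (u : U) : closed F -> closed [set v | F (u, v)].
Proof.
apply: (preimage_closed (f := pair u)) => v _.
by apply: cvg_pair; [exact: cvg_cst | exact: cvg_id].
Qed.

Lemma open_nbhs_setX (p : U * V) (W : set (U * V)) : nbhs p W ->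
  exists A B, [/\ open_nbhs p.1 A, open_nbhs p.2 B & A `*` B `<=` W].
Proof.
case=> -[A B] /= [nA nB] ABW; exists A°, B°; split.
- by split; [exact: open_interior | exact: nbhs_singleton (nbhs_interior nA)].
- by split; [exact: open_interior | exact: nbhs_singleton (nbhs_interior nB)].
by move=> q [/interior_subset Aq /interior_subset Bq]; exact: ABW.
Qed.

End ProductTopology.

Section CountableRegular.
Variable Y : topologicalType.
Hypotheses (cY : countable [set: Y]) (rY : regular_space Y).

Definition separated_in (O U V : set Y) :=
  [/\ open U, open V & closure U `<=` O `\` closure V].

Lemma separated_in_extend (O : set Y) (U V : set Y) (z : Y) :
  open O -> separated_in O U V ->
  exists2 UV : set Y * set Y, separated_in O UV.1 UV.2 &
    [/\ U `<=` UV.1, V `<=` UV.2 & UV.1 z \/ UV.2 z].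
Proof.
move=> oO [oU oV clU].
have ocV : open (~` closure V) by exact/closed_openC/closed_closure.
have [zOV|zOV] := pselect ((O `\` closure V) z).
  have [W [oW Wz] clW] := regular_open_nbhs_closure rY (openI oO ocV) zOV.
  exists (U `|` W, V) => /=.
    by split; [exact: openU | by [] | rewrite closureU subUset].
  by split; [exact: subsetUl | by [] | left; right].
have zU : ~ closure U z := fun Uz => zOV (clU z Uz).
have ocU : open (~` closure U) by exact/closed_openC/closed_closure.
have [W [oW Wz] clW] := regular_open_nbhs_closure rY ocU zU.
exists (U, V `|` W) => /=; last by split; [by [] | exact: subsetUl | right; right].
split; [by [] | exact: openU | rewrite closureU => x Ux].
by have [Ox nVx] := clU x Ux; split=> // -[//|/clW].
Qed.

Lemma countable_regular_clopen_nbhs (O : set Y) (y0 : Y) : open O -> O y0 ->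
  exists C : set Y, [/\ open C, closed C, C y0 & C `<=` O].
Proof.
(* Two increasing sequences of open sets with disjoint closures, grown until they
   cover an enumeration of Y, have complementary unions. *)
move=> oO Oy0; have [e e_surj] := countable_nat_surj y0 cY.
have step n (UV : set Y * set Y) : exists UV' : set Y * set Y,
    separated_in O UV.1 UV.2 -> separated_in O UV'.1 UV'.2 /\
    [/\ UV.1 `<=` UV'.1, UV.2 `<=` UV'.2 & UV'.1 (e n) \/ UV'.2 (e n)].
  have [/(separated_in_extend (e n) oO)[UV' ? ?]|] :=
    pselect (separated_in O UV.1 UV.2); [by exists UV' | by exists UV].
have [ext ext_spec] := choice (fun p : nat * (set Y * set Y) => step p.1 p.2).
have [W0 [oW0 W0y0] clW0] := regular_open_nbhs_closure rY oO Oy0.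
pose UV := fix UV n := if n is m.+1 then ext (m, UV m) else (W0, set0).
have UV_sep n : separated_in O (UV n).1 (UV n).2.
  elim: n => [|n IH]; last exact: (ext_spec (n, _) IH).1.
  by split => //=; [exact: open0 | rewrite closure0 setD0].
have UV_step n : (UV n).1 `<=` (UV n.+1).1 /\ (UV n).2 `<=` (UV n.+1).2.
  by have [_ []] := ext_spec (n, _) (UV_sep n).
have UV_mono n m : (n <= m)%N -> (UV n).1 `<=` (UV m).1 /\ (UV n).2 `<=` (UV m).2.
  move=> nm; split.
    by apply: (nondecreasing_sets (A := fun k => (UV k).1)) nm => k; case: (UV_step k).
  by apply: (nondecreasing_sets (A := fun k => (UV k).2)) nm => k; case: (UV_step k).
pose C := \bigcup_n (UV n).1; pose D := \bigcup_n (UV n).2.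
have CD : C = ~` D.
  apply/seteqP; split => [x [n _ Cx] [m _ Dx]|x].
    have [h1 _] := UV_mono n (maxn n m) (leq_maxl n m).
    have [_ h2] := UV_mono m (maxn n m) (leq_maxr n m).
    have [_ _ /(_ x (subset_closure (h1 x Cx)))[_]] := UV_sep (maxn n m).
    by apply; apply/subset_closure/h2.
  have [n <-] := e_surj x => nDx.
  have [_ [_ _ [h|h]]] := ext_spec (n, _) (UV_sep n); first by exists n.+1.
  by case: nDx; exists n.+1.
exists C; split.
- by apply: bigcup_open => n _; case: (UV_sep n).
- by rewrite CD; apply: open_closedC; apply: bigcup_open => n _; case: (UV_sep n).
- by exists 0%N.
- by move=> x [n _ /subset_closure Cx]; have [_ _ /(_ x Cx)[]] := UV_sep n.
Qed.

Hypothesis tY : T1_space Y.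

Lemma countable_regular_nested_clopen (y0 : Y) (O : nat -> set Y) :
  (forall k, open (O k) /\ O k y0) ->
  exists C : nat -> set Y, [/\ C 0%N = setT,
    (forall k, open (C k) /\ closed (C k)),
    (forall k, C k.+1 `<=` C k `&` O k),
    (forall k, C k y0) & (forall y, y <> y0 -> exists k, ~ C k y)].
Proof.
move=> oO; have [e e_surj] := countable_nat_surj y0 cY.
have D_ex k : exists D : set Y, [/\ open D, closed D,
    D y0, D `<=` O k & e k <> y0 -> ~ D (e k)].
  have [oOk Oky0] := oO k.
  have [ey0|ey0] := pselect (e k = y0).
    have [D [? ? ? ?]] := countable_regular_clopen_nbhs oOk Oky0.
    by exists D; split.
  have oOe : open (O k `\` [set e k]).
    exact/openI/closed_openC/accessible_closed_set1.
  have [D [? ? Dy0 DO]] := countable_regular_clopen_nbhs oOe (conj Oky0 (nesym ey0)).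
  by exists D; split => // [x /DO[] // | _ /DO[_]]; apply.
have [D D_spec] := choice D_ex.
pose C := fix C n := if n is m.+1 then C m `&` D m else setT.
exists C; split => //.
- elim=> [|k [oC cC]] /=; first by split; [exact: openT | exact: closedT].
  by have [oD cD _ _ _] := D_spec k; split; [exact: openI | exact: closedI].
- by move=> k x [Cx Dx]; have [_ _ _ DO _] := D_spec k; split => //; exact: DO.
- by elim=> [//|k IH] /=; split => //; have [] := D_spec k.
- move=> y yy0; have [k ek] := e_surj y; exists k.+1 => -[_].
  by have [_ _ _ _] := D_spec k; rewrite ek; exact.
Qed.

End CountableRegular.

Section Selections.
Variables Y Z : topologicalType.

Definition closed_lsc (psi : Y -> set Z) :=
  (forall y, closed (psi y) /\ psi y !=set0) /\ lsc psi.

Definition singleton_usc_at (psi : Y -> set Z) (y0 : Y) (z0 : Z) :=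
  psi y0 = [set z0] /\ forall W, open W -> W z0 -> nbhs y0 [set y | psi y `<=` W].

Definition singleton_reducible := forall (psi : Y -> set Z) (y0 : Y),
  closed_lsc psi -> exists psi' : Y -> set Z,
    [/\ closed_lsc psi', forall y, psi' y `<=` psi y &
        exists z0, singleton_usc_at psi' y0 z0].

Lemma lsc_closure (psi : Y -> set Z) : lsc psi -> lsc (fun y => closure (psi y)).
Proof.
move=> psi_lsc U oU; suff -> : [set y | closure (psi y) `&` U !=set0] =
    [set y | psi y `&` U !=set0] by exact: psi_lsc.
apply/seteqP; split => y [z [psiz Uz]].
  exact: psiz U (open_nbhs_nbhs (conj oU Uz)).
by exists z; split => //; exact: subset_closure.
Qed.

Lemma continuous_selection_of_nonincreasing (ps : nat -> Y -> set Z) (n : Y -> nat) :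
  (forall m y, ps m y !=set0) -> (forall m y, ps m.+1 y `<=` ps m y) ->
  (forall y, exists z, singleton_usc_at (ps (n y)) y z) ->
  exists f : Y -> Z, continuous f /\ forall m y, ps m y (f y).
Proof.
move=> ps_ne ps_dec /choice[f f_usc].
have ps_f m y : ps m y (f y).
  have [psf _] := f_usc y; have ps_mono := nonincreasing_sets (ps_dec ^~ y).
  have [mn|nm] := leqP m (n y); first by apply: (ps_mono _ _ mn); rewrite psf.
  have [z psz] := ps_ne m y.
  by have := ps_mono _ _ (ltnW nm) z psz; rewrite psf => <-.
exists f; split => //; apply/continuousP => A oA; rewrite openE => y Afy.
have [_ /(_ A oA Afy)] := f_usc y; apply: filterS => y' sA.
exact: sA (ps_f _ y').
Qed.

Lemma selective_of_singleton_reducible :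
  countable [set: Y] -> singleton_reducible -> selective_for Y Z.
Proof.
move=> cY red phi phi_cl phi_lsc.
have [[y0 _]|Y0] := pselect (exists y : Y, True); last first.
  have [g phig] := choice (fun y => (phi_cl y).2).
  by exists g; split => // y; case: Y0; exists y.
have [e e_surj] := countable_nat_surj y0 cY.
have step (np : nat * (Y -> set Z)) : exists psi', closed_lsc np.2 ->
    [/\ closed_lsc psi', forall y, psi' y `<=` np.2 y &
        exists z, singleton_usc_at psi' (e np.1) z].
  have [/(red _ (e np.1))[psi' ?]|ncl] := pselect (closed_lsc np.2).
    by exists psi'.
  by exists np.2.
have [reduce reduce_spec] := choice step.
pose ps := fix ps n := if n is m.+1 then reduce (m, ps m) else phi.
have ps_cl m : closed_lsc (ps m).
  by elim: m => [|m IH]; [split | have [] := reduce_spec (m, ps m) IH].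
have [idx idxK] := choice e_surj.
have [|||f [f_cont f_sel]] := continuous_selection_of_nonincreasing
    (ps := ps) (n := fun y => (idx y).+1).
- by move=> m y; have [/(_ y)[_ ?] _] := ps_cl m.
- by move=> m y; have [_ + _] := reduce_spec (m, ps m) (ps_cl m); apply.
- by move=> y; have [_ _] := reduce_spec (idx y, ps (idx y)) (ps_cl _); rewrite /= idxK.
by exists f; split => // y; exact: f_sel 0%N y.
Qed.

End Selections.

Section Layers.
Variables (Y : topologicalType) (C : nat -> set Y) (y0 : Y).
Hypotheses (C0 : C 0%N = setT) (C_clopen : forall k, open (C k) /\ closed (C k))
  (C_dec : forall k, C k.+1 `<=` C k) (C_y0 : forall k, C k y0)
  (C_y0_only : forall y, y <> y0 -> exists k, ~ C k y).

Definition layer k := C k `\` C k.+1.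

Lemma open_layer k : open (layer k).
Proof. exact: openI (C_clopen k).1 (closed_openC (C_clopen k.+1).2). Qed.

Lemma layer_ge k m y : C k y -> layer m y -> (k <= m)%N.
Proof.
move=> Cky [_ nCy]; rewrite leqNgt; apply/negP => mk; apply: nCy.
exact: nonincreasing_sets C_dec _ _ mk _ Cky.
Qed.

Lemma layer_inj k m y : layer k y -> layer m y -> k = m.
Proof.
by move=> ly ly'; apply/eqP; rewrite eqn_leq (layer_ge ly'.1 ly) (layer_ge ly.1 ly').
Qed.

Lemma layer_exists y : y <> y0 -> exists k, layer k y.
Proof.
move=> /C_y0_only[k]; elim: k => [|k IH] nCy; first by case: nCy; rewrite C0.
by have [Cy|/IH] := pselect (C k y); [exists k | apply].
Qed.

Variables (Z : topologicalType) (F : nat -> Y -> set Z) (z0 : Z).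

Definition glue y := [set z | (y = y0 /\ z = z0) \/ exists2 k, layer k y & F k y z].

Lemma glue_y0 : glue y0 = [set z0].
Proof.
apply/seteqP; split => [z [[_ //] | [k [_ nCy0] _]] | z ->]; last by left.
by case: (nCy0 (C_y0 k.+1)).
Qed.

Lemma glue_layer k y : layer k y -> glue y = F k y.
Proof.
move=> ly; apply/seteqP; split => [z [[yy0 _]|[m lmy]]|z Fz]; last by right; exists k.
  by case: ly.2; rewrite yy0.
by rewrite (layer_inj ly lmy).
Qed.

Hypotheses (F_closed : forall k y, closed (F k y))
  (F_ne : forall k y, layer k y -> F k y !=set0) (F_lsc : forall k, lsc (F k))
  (z0_closed : closed [set z0])
  (F_usc : forall W, open W -> W z0 ->
     exists k, forall m y, (k <= m)%N -> layer m y -> F m y `<=` W).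

Lemma glue_ne y : glue y !=set0.
Proof.
have [->|/layer_exists[k lky]] := pselect (y = y0); first by rewrite glue_y0; exists z0.
by rewrite (glue_layer lky); exact: F_ne.
Qed.

Lemma glue_usc : singleton_usc_at glue y0 z0.
Proof.
split; first exact: glue_y0.
move=> W oW Wz0; have [k Fk] := F_usc oW Wz0.
apply: filterS (open_nbhs_nbhs (conj (C_clopen k).1 (C_y0 k))) => y Cky.
have [->|/layer_exists[m lmy]] := pselect (y = y0); first by rewrite /= glue_y0 => z ->.
by rewrite /= (glue_layer lmy); exact: Fk (layer_ge Cky lmy) lmy.
Qed.

Lemma glue_closed_lsc : closed_lsc glue.
Proof.
split=> [y|U oU].
  split; last exact: glue_ne.
  have [->|/layer_exists[k lky]] := pselect (y = y0); first by rewrite glue_y0.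
  by rewrite (glue_layer lky).
rewrite openE => y [z [glue_z Uz]].
have [yy0|/layer_exists[k lky]] := pselect (y = y0).
  move: glue_z Uz; rewrite yy0 glue_y0 => -> Uz0.
  have [_ /(_ U oU Uz0)] := glue_usc; apply: filterS => y' glueU.
  by have [z' gz'] := glue_ne y'; exists z'; split => //; exact: glueU.
have lsc_k : nbhs y (layer k `&` [set y' | F k y' `&` U !=set0]).
  apply: open_nbhs_nbhs; split; first exact: openI (open_layer k) (F_lsc k oU).
  by split => //; exists z; rewrite -(glue_layer lky).
by apply: filterS lsc_k => y' [lky' FU]; rewrite /= (glue_layer lky').
Qed.

End Layers.

Definition shrinks_to (T : topologicalType) (S : nat -> set T) (x : T) :=
  forall W, open W -> W x -> exists k, forall j, (k <= j)%N -> closure (S j) `<=` W.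

Lemma singleton_reduction (Y Z : topologicalType) (psi : Y -> set Z) (y0 : Y) (z0 : Z)
    (V S : nat -> set Z) :
  countable [set: Y] -> regular_space Y -> T1_space Y ->
  closed_lsc psi -> psi y0 z0 -> closed [set z0] ->
  (forall k, open (V k) /\ V k z0) ->
  (forall k y, psi y `&` V k !=set0 -> psi y `&` S k !=set0) ->
  (forall k, lsc (fun y => psi y `&` S k)) -> shrinks_to S z0 ->
  exists psi' : Y -> set Z,
    [/\ closed_lsc psi', forall y, psi' y `<=` psi y & singleton_usc_at psi' y0 z0].
Proof.
move=> cY rY tY [psi_cl psi_lsc] psi_z0 z0_cl V_nbhs VS S_lsc S_shrink.
pose O k := [set y | psi y `&` V k !=set0].
have O_nbhs k : open (O k) /\ O k y0.
  by have [oV Vz0] := V_nbhs k; split; [exact: psi_lsc | exists z0].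
have [C [C0 C_clopen C_dec C_y0 C_y0_only]] :=
  countable_regular_nested_clopen cY rY tY O_nbhs.
have C_dec' k : C k.+1 `<=` C k by move=> y /C_dec[].
pose F k y := if k is j.+1 then closure (psi y `&` S j) else psi y.
have F_closed k y : closed (F k y).
  by case: k => [|j] /=; [exact: (psi_cl y).1 | exact: closed_closure].
have F_ne k y : layer C k y -> F k y !=set0.
  case: k => [|j] [Cy _] /=; first exact: (psi_cl y).2.
  by have [z [psiz Sz]] := VS j y (C_dec j y Cy).2; exists z; apply: subset_closure.
have F_lsc k : lsc (F k) by case: k => [|j] //=; exact/lsc_closure/S_lsc.
have F_usc W : open W -> W z0 ->
    exists k, forall m y, (k <= m)%N -> layer C m y -> F m y `<=` W.
  move=> oW Wz0; have [k Sk] := S_shrink W oW Wz0.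
  exists k.+1 => -[//|j] y kj _ /=.
  exact: subset_trans (closureS (@subIsetr _ _ _)) (Sk j kj).
exists (glue C y0 F z0); split.
- exact: glue_closed_lsc.
- move=> y z [[-> ->] //|[[|j] _ /=]] //.
  by apply: closure_sub_closed; [exact: (psi_cl y).1 | exact: subIsetl].
- exact: glue_usc.
Qed.

Section GOSpace.
Variables (X : topologicalType) (le : X -> X -> Prop).
Hypothesis X_GO : GO_space le.

Let le_order : linear_order le. Proof. by case: X_GO. Qed.
Let le_refl x : le x x. Proof. by have [] := le_order. Qed.
Let le_anti x y : le x y -> le y x -> x = y.
Proof. by have [_ anti _ _] := le_order; exact: anti. Qed.
Let le_trans x y z : le x y -> le y z -> le x z.
Proof. by have [_ _ trans _] := le_order; exact: trans. Qed.
Let le_total x y : le x y \/ le y x. Proof. by have [_ _ _] := le_order. Qed.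
Let open_right a : open [set x | le a x /\ x <> a]. Proof. by case: X_GO. Qed.

Lemma GO_flip : GO_space (fun x y => le y x).
Proof.
case: X_GO => _ oR oL base; split => //.
  split=> [x|x y yx xy|x y z yx zy|x y]; [exact: le_refl | exact: le_anti xy yx |
    exact: le_trans zy yx | by case: (le_total x y); [right | left]].
move=> U x oU Ux; have [V [oV cV Vx VU]] := base U x oU Ux.
by exists V; split => // a b c Va Vc ba cb; exact: cV c b a Vc Va cb ba.
Qed.

Lemma closed_interval a b : closed [set w | le a w /\ le w b].
Proof.
case: X_GO => _ oR oL _.
suff -> : [set w | le a w /\ le w b] =
    ~` ([set w | le w a /\ w <> a] `|` [set w | le b w /\ w <> b]).
  exact/open_closedC/openU.
apply/seteqP; split=> [w [aw wb] [[wa wna]|[bw wnb]]|w nw].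
- exact/wna/le_anti.
- exact/wnb/le_anti.
split.
- case: (le_total a w) => // wa; have [->//|wna] := pselect (w = a).
  by case: nw; left.
- case: (le_total w b) => // bw; have [->//|wnb] := pselect (w = b).
  by case: nw; right.
Qed.

Variable x0 : X.

Lemma left_interval_nbhs :
  (forall U, open U -> U x0 -> exists w, [/\ U w, le w x0 & w <> x0]) ->
  forall W, open W -> W x0 ->
  exists l, [/\ le l x0, l <> x0 & forall w, le l w -> le w x0 -> W w].
Proof.
case: X_GO => _ _ _ base x0_left W oW Wx0.
have [V [oV cV Vx0 VW]] := base W x0 oW Wx0.
have [l [Vl lx0 lnx0]] := x0_left V oV Vx0.
by exists l; split => // w lw wx0; apply: VW; exact: cV l w x0 Vl Vx0 lw wx0.
Qed.

Lemma running_max (s : nat -> X) : exists a : nat -> X,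
  [/\ forall k, le (s k) (a k), forall k j, (k <= j)%N -> le (a k) (a j) &
      forall k, exists i, a k = s i].
Proof.
have max2 x y : exists m, [/\ le x m, le y m & m = x \/ m = y].
  by case: (le_total x y) => xy; [exists y | exists x]; split; auto.
have [mx mx_spec] := choice (fun xy : X * X => max2 xy.1 xy.2).
pose a := fix a n := if n is m.+1 then mx (a m, s m.+1) else s 0%N.
exists a; split.
- by case=> [|k] //=; have [] := mx_spec (a k, s k.+1).
- apply: homo_leq => // [y x z|k] /=; first exact: le_trans.
  by have [] := mx_spec (a k, s k.+1).
- elim=> [|k [i IH]] /=; first by exists 0%N.
  by have [_ _ [->|->]] := mx_spec (a k, s k.+1); [exists i | exists k.+1].
Qed.

Lemma left_approximation (P : nat -> set X) : (forall n, closed (P n)) ->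
  exists (a : nat -> X) (Q : nat -> set X), [/\
    forall k, le (a k) x0,
    forall k, open (Q k) /\ Q k x0,
    forall k n w, P n w -> Q k w -> le w (a k) -> w <> x0 -> P n x0 &
    forall W, open W -> W x0 -> exists k, forall j, (k <= j)%N ->
      forall w, le (a j) w -> le w x0 -> W w].
Proof.
(* Either x0 is isolated from the left, or it is the limit of a sequence from the
   left, or else the countably many gaps [g n] below x0 are bounded by one l < x0. *)
move=> P_closed.
have [[U [oU Ux0 U_left]]|x0_left] := pselect (exists U, [/\ open U, U x0 &
    forall w, U w -> le w x0 -> w = x0]).
  exists (fun=> x0), (fun=> U); split => // [k n w _ Uw wx0 /(_ (U_left w Uw wx0))[]|].
  by move=> W _ Wx0; exists 0%N => j _ w x0w wx0; rewrite (le_anti wx0 x0w).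
have {}x0_left U : open U -> U x0 -> exists w, [/\ U w, le w x0 & w <> x0].
  move=> oU Ux0; apply: contrapT => nw; apply: x0_left; exists U; split => // w Uw wx0.
  by apply: contrapT => wnx0; apply: nw; exists w.
have x0_interval := left_interval_nbhs x0_left.
have [[s [s_lt s_cof]]|s_bounded] := pselect (exists s : nat -> X,
    (forall k, le (s k) x0 /\ s k <> x0) /\
    forall l, le l x0 -> l <> x0 -> exists k, le l (s k)).
  have [a [sa a_mono a_s]] := running_max s.
  have a_lt k : le (a k) x0 /\ a k <> x0 by have [i ->] := a_s k; exact: s_lt.
  exists a, (fun k => [set w | le (a k) w /\ w <> a k]); split.
  - by move=> k; case: (a_lt k).
  - by move=> k; split; [exact: open_right | case: (a_lt k) => ? /nesym].
  - by move=> k n w _ [akw wak] wak'; case: wak; exact: le_anti.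
  move=> W oW Wx0; have [l [lx0 lnx0 lW]] := x0_interval W oW Wx0.
  have [k lsk] := s_cof l lx0 lnx0; exists k => j kj w ajw wx0; apply: lW => //.
  exact: le_trans lsk (le_trans (sa k) (le_trans (a_mono k j kj) ajw)).
have gap n : exists l, [/\ le l x0, l <> x0 &
    ~ P n x0 -> forall w, le l w -> le w x0 -> ~ P n w].
  have [Px0|nPx0] := pselect (P n x0).
    by have [l [? ? _]] := x0_interval _ openT I; exists l.
  have [l [? ? lP]] := x0_interval _ (closed_openC (P_closed n)) nPx0.
  by exists l; split => // _; exact: lP.
have [g g_gap] := choice gap.
have [l [lx0 lnx0 gl]] : exists l, [/\ le l x0, l <> x0 & forall n, le (g n) l].
  apply: contrapT => nl; apply: s_bounded; exists g; split.
    by move=> n; have [] := g_gap n.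
  move=> l lx0 lnx0; apply: contrapT => nk; apply: nl; exists l; split => // n.
  by case: (le_total (g n) l) => // lg; case: nk; exists n.
exists (fun=> x0), (fun=> [set w | le l w /\ w <> l]); split => //.
- by move=> k; split; [exact: open_right | split => // /nesym].
- move=> k n w Pw [lw _] wx0 wnx0; apply: contrapT => nPx0.
  by have [_ _ /(_ nPx0 w (le_trans (gl n) lw) wx0)] := g_gap n.
by move=> W _ Wx0; exists 0%N => j _ w x0w wx0; rewrite (le_anti wx0 x0w).
Qed.

End GOSpace.

Lemma GO_retraction_nbhs (X : topologicalType) (le : X -> X -> Prop) (x0 : X)
    (P : nat -> set X) : GO_space le -> (forall n, closed (P n)) ->
  exists Q G : nat -> set X, [/\ forall k, open (Q k) /\ Q k x0,
    forall k, open (G k),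
    forall k n w, P n w -> Q k w -> G k w \/ P n x0 &
    shrinks_to (fun k => [set x0] `|` G k) x0].
Proof.
move=> X_GO P_closed.
have [a [QL [ax0 QL_nbhs QL_retr a_shrink]]] := left_approximation X_GO x0 P_closed.
have [b [QR [x0b QR_nbhs QR_retr b_shrink]]] :=
  left_approximation (GO_flip X_GO) x0 P_closed.
have [[le_refl le_anti le_trans le_total] oR oL _] := X_GO.
pose G k := [set w | (le (a k) w /\ w <> a k) /\ (le w x0 /\ w <> x0)] `|`
            [set w | (le x0 w /\ w <> x0) /\ (le w (b k) /\ w <> b k)].
exists (fun k => QL k `&` QR k), G; split.
- move=> k; have [oQL QLx0] := QL_nbhs k; have [oQR QRx0] := QR_nbhs k.
  by split; [exact: openI | split].
- by move=> k; apply: openU; apply: openI;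
    [exact: oR | exact: oL | exact: oR | exact: oL].
- move=> k n w Pw [QLw QRw]; have [<-|wx0] := pselect (w = x0); first by right.
  case: (le_total w x0) => [wlex0|x0lew].
    have [wa|wna] := pselect (le w (a k)); first by right; exact: QL_retr Pw QLw wa wx0.
    left; left; split => //; split; first by case: (le_total (a k) w) => // /wna.
    by move=> wa; apply: wna; rewrite wa; exact: le_refl.
  have [bw|bnw] := pselect (le (b k) w); first by right; exact: QR_retr Pw QRw bw wx0.
  left; right; split => //; split; first by case: (le_total w (b k)) => // /bnw.
  by move=> wb; apply: bnw; rewrite wb; exact: le_refl.
move=> W oW Wx0.
have [kL aW] := a_shrink W oW Wx0; have [kR bW] := b_shrink W oW Wx0.
exists (maxn kL kR) => j; rewrite geq_max => /andP[kLj kRj].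
apply: (subset_trans (closure_sub_closed (@closed_interval _ _ X_GO (a j) (b j)) _)).
  move=> w [->|[[[aw _] [wx0 _]]|[[x0w _] [wb _]]]]; first by split.
  - by split => //; exact: le_trans wx0 (x0b j).
  - by split => //; exact: le_trans (ax0 j) x0w.
move=> w [aw wb]; case: (le_total w x0) => [wx0|x0w]; first exact: aW j kLj w aw wx0.
exact: bW j kRj w wb x0w.
Qed.

Lemma shrinks_to_setX (U V : topologicalType) (A : nat -> set U) (B : nat -> set V)
    (u : U) (v : V) :
  shrinks_to A u -> shrinks_to B v -> shrinks_to (fun k => A k `*` B k) (u, v).
Proof.
move=> A_shrink B_shrink W oW Wuv.
have [A' [B' [[oA' A'u] [oB' B'v] ABW]]] :=
  open_nbhs_setX (open_nbhs_nbhs (conj oW Wuv)).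
have [kA kA_spec] := A_shrink A' oA' A'u; have [kB kB_spec] := B_shrink B' oB' B'v.
exists (maxn kA kB) => j; rewrite geq_max => /andP[kAj kBj].
apply: subset_trans ABW; apply: (subset_trans (closure_sub_closed
  (closed_setX (@closed_closure _ (A j)) (@closed_closure _ (B j))) _)).
  exact: setSX (@subset_closure _ _) (@subset_closure _ _).
exact: setSX (kB_spec j kBj) (kA_spec j kAj).
Qed.

Local Open Scope ring_scope.

Lemma metrizable_shrinking_nbhs (E : topologicalType) (e0 : E) : metrizable E ->
  exists B : nat -> set E, (forall k, open (B k) /\ B k e0) /\ shrinks_to B e0.
Proof.
move=> [d [_ d_eq0 d_sym d_tri d_open]].
pose r (k : nat) : Rdefinitions.R := k.+1%:R^-1.
have r_gt0 k : 0 < r k by rewrite invr_gt0 ltr0n.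
have r_dec k j : (k <= j)%N -> r j <= r k.
  by move=> kj; rewrite lef_pV2 ?posrE ?ltr0n // ler_nat ltnS.
have ball_open x (rho : Rdefinitions.R) : open [set e | d x e < rho].
  apply/d_open => e /= xe; exists (rho - d x e); first by rewrite subr_gt0.
  by move=> e' /= ee'; have := d_tri x e e'; lra.
have cball_closed (rho : Rdefinitions.R) : closed [set e | d e0 e <= rho].
  rewrite -openC; apply/d_open => e /= /negP; rewrite -ltNge => rhoe.
  exists (d e0 e - rho); first by rewrite subr_gt0.
  by move=> e' /= ee' e'rho; have := d_tri e0 e' e; rewrite (d_sym e' e); lra.
exists (fun k => [set e | d e0 e < r k]); split.
  by move=> k; split; [exact: ball_open | rewrite /= (proj2 (d_eq0 e0 e0) erefl)].
move=> W oW We0; have [rho rho_gt0 rhoW] := (proj1 (d_open W) oW) e0 We0.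
exists (Num.truncn rho^-1) => j kj.
apply: (subset_trans (closure_sub_closed (cball_closed (r j)) _)).
  by move=> e /ltW.
move=> e /= ej.
apply: rhoW => /=; apply: (le_lt_trans ej); apply: (le_lt_trans (r_dec _ _ kj)).
by rewrite /r invf_plt ?posrE ?ltr0n //; exact: truncnS_gt.
Qed.

Local Close Scope ring_scope.

Lemma lsc_setI_fiber_retract (Y E X : topologicalType) (psi : Y -> set (E * X))
    (B : set E) (Q G : set X) (x0 : X) :
  lsc psi -> open B -> open Q -> Q x0 -> open G ->
  (forall y e w, psi y (e, w) -> Q w -> G w \/ psi y (e, x0)) ->
  lsc (fun y => psi y `&` B `*` ([set x0] `|` G)).
Proof.
move=> psi_lsc oB oQ Qx0 oG retr U oU; rewrite openE => y [[e w] [[psiz [Be Sw]] Uz]].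
case: Sw => [/= wx0|Gw]; last first.
  have oUBG : open (U `&` B `*` G) by apply: openI => //; exact: open_setX.
  apply: filterS (open_nbhs_nbhs (conj (psi_lsc _ oUBG) _)); last by exists (e, w).
  move=> y' [z' [psiz' [Uz' [Bz' Gz']]]].
  by exists z'; do ![split] => //; right.
rewrite {}wx0 in psiz Uz.
have oUBQ : open (U `&` B `*` Q) by apply: openI => //; exact: open_setX.
have [A [A' [[oA Ae] [oA' A'x0] AUBQ]]] :=
  open_nbhs_setX (open_nbhs_nbhs (conj oUBQ (conj Uz (conj Be Qx0)))).
apply: filterS (open_nbhs_nbhs (conj (psi_lsc _ (open_setX oA oA')) _)); last first.
  by exists (e, x0).
move=> y' [[e' w'] [psiz' [Ae' A'w']]].
have [Uz' [Be' Qw']] := AUBQ (e', w') (conj Ae' A'w').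
have [Ux0' _] := AUBQ (e', x0) (conj Ae' A'x0).
have [Gw'|psix0'] := retr y' e' w' psiz' Qw'.
  by exists (e', w'); do ![split] => //; right.
by exists (e', x0); do ![split] => //; left.
Qed.

Lemma GO_metrizable_singleton_reducible (X E Y : topologicalType)
    (le : X -> X -> Prop) :
  GO_space le -> T1_space X -> metrizable E -> T1_space E ->
  countable [set: E] -> countable [set: Y] -> regular_space Y -> T1_space Y ->
  singleton_reducible Y (E * X)%type.
Proof.
move=> X_GO tX mE tE cE cY rY tY psi y0 [psi_cl psi_lsc].
have [[e0 x0] psi_z0] := (psi_cl y0).2.
have [B [B_nbhs B_shrink]] := metrizable_shrinking_nbhs e0 mE.
have cYE : countable [set: Y * E] by rewrite -setXTT; exact: countableX.
have [t t_surj] := countable_nat_surj (y0, e0) cYE.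
pose P n := [set w | psi (t n).1 ((t n).2, w)].
have P_closed n : closed (P n) by apply: closed_fiber; exact: (psi_cl _).1.
have [Q [G [Q_nbhs G_open P_retr G_shrink]]] := GO_retraction_nbhs x0 X_GO P_closed.
have retr k y e w : psi y (e, w) -> Q k w -> G k w \/ psi y (e, x0).
  by have [n tn] := t_surj (y, e); have := P_retr k n w; rewrite /P tn; exact.
have z0_closed : closed [set (e0, x0)].
  suff -> : [set (e0, x0)] = [set e0] `*` [set x0].
    by apply: closed_setX; exact: accessible_closed_set1.
  by apply/seteqP; split => [_ -> //|[e w] /= [-> ->]].
have [||||psi' [psi'_cl psi'_sub psi'_usc]] := singleton_reduction
  (V := fun k => B k `*` Q k) (S := fun k => B k `*` ([set x0] `|` G k))
  cY rY tY (conj psi_cl psi_lsc) psi_z0 z0_closed.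
- move=> k; have [oB Be0] := B_nbhs k; have [oQ Qx0] := Q_nbhs k.
  by split; [exact: open_setX | split].
- move=> k y [[e w] [psiz [Be Qw]]].
  have [Gw|psix0] := retr k y e w psiz Qw.
    by exists (e, w); do ![split] => //; right.
  by exists (e, x0); do ![split] => //; left.
- move=> k; have [oB _] := B_nbhs k; have [oQ Qx0] := Q_nbhs k.
  exact: lsc_setI_fiber_retract psi_lsc oB oQ Qx0 (G_open k) (retr k).
- exact: shrinks_to_setX B_shrink G_shrink.
by exists psi'; split => //; exists (e0, x0).
Qed.

Theorem mainTheorem15 (X : topologicalType) (le : X -> X -> Prop)
  (E : topologicalType) :
  GO_space le -> T1_space X ->
  countable [set: E] -> metrizable E -> T1_space E ->
  C_selective (E * X)%type.
Proof.
move=> X_GO tX cE mE tE Y cY rY tY.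
apply: (selective_of_singleton_reducible cY).
exact: GO_metrizable_singleton_reducible X_GO tX mE tE cE cY rY tY.
Qed.
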